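(* Let $r,s\ge 1$ and let $A=(A_{ij})_{i,j=1}^r$ be an $rs\times rs$ matrix with non-negative entries, written in $s\times s$ blocks $A_{ij}$, which is a disoriented $(r,s)$-block circulant matrix. Suppose that \[ \left( \sum_{j=1}^r A_{1j} \right) \mathbf{J}_s = \mathbf{J}_s \left( \sum_{j=1}^r A_{1j} \right). \] Then $\rho(A) = \rho\left(\sum_{j=1}^r A_{1j} \right)$.
   Context: $\rho(M)$ denotes the spectral radius of a square matrix $M$. $\mathbf{J}_s$ denotes the $s\times s$ $(0,1)$-matrix with ones exactly on the anti-diagonal. An $(r,s)$-block circulant matrix is an $rs\times rs$ matrix in $s\times s$ blocks of the form whose first block row is $(B_1\ B_2\ \dots\ B_r)$ and whose $i$-th block row is the first block row cyclically shifted $i-1$ places to the right (so block $(i,j)$ is $B_{[j-i+1]_r}$, indices mod $r$ in $\{1,\dots,r\}$). An $(r,s)$-disoriented block circulant matrix is a block matrix $A=(A_{ij})_{i,j=1}^r$ with $s\times s$ blocks for which there is an $(r,s)$-block circulant matrix $\widetilde A=(\widetilde A_{ij})$ with the same first block row ($\widetilde A_{1j}=A_{1j}$ for all $j$) such that for each $i\in\{2,\dots,r\}$ either $A_{ij}=\widetilde A_{ij}$ for all $j=1,\dots,r$, or $A_{ij}=\mathbf{J}_s\widetilde A_{ij}$ for all $j=1,\dots,r$. *)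

From HB Require Import structures.
From mathcomp Require Import all_boot all_order all_algebra.
From mathcomp Require Import complex.
Set Implicit Arguments. Unset Strict Implicit. Unset Printing Implicit Defensive.
Import Order.TTheory GRing.Theory Num.Theory.
Local Open Scope ring_scope.

Definition Jmat (R : pzRingType) (s : nat) : 'M[R]_s :=
  \matrix_(i < s, j < s) ((i + j == s.-1)%N)%:R.

(* The (i,j) s x s block of an rs x rs matrix (0-based block indices);
   entry (k,l) of block (i,j) is A (i*s+k) (j*s+l). *)
Lemma blk_idx_lt (r s : nat) (i : 'I_r) (k : 'I_s) : (i * s + k < r * s)%N.
Proof.
have Hk := ltn_ord k; have Hi := ltn_ord i.
apply: (@leq_trans (i * s + s)); first by rewrite ltn_add2l.
by rewrite -[X in (_ + X)%N]mul1n -mulnDl addn1 leq_mul2r Hi orbT.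
Qed.

Definition blk_idx (r s : nat) (i : 'I_r) (k : 'I_s) : 'I_(r * s) :=
  Ordinal (blk_idx_lt i k).

Definition blk (R : Type) (r s : nat) (A : 'M[R]_(r * s)) (i j : 'I_r) : 'M[R]_s :=
  \matrix_(k < s, l < s) A (blk_idx i k) (blk_idx j l).

Lemma ord_pos (r : nat) (i : 'I_r) : (0 < r)%N.
Proof. exact: leq_ltn_trans (leq0n i) (ltn_ord i). Qed.

Definition row0 (r : nat) (i : 'I_r) : 'I_r := Ordinal (ord_pos i).

(* In a block circulant matrix, block (i,j) (0-based) is the first-row block
   with 0-based index (j - i) mod r. *)
Definition circ_idx (r : nat) (i j : 'I_r) : 'I_r :=
  Ordinal (ltn_pmod (j + r - i) (ord_pos i)).

(* A is an (r,s)-disoriented block circulant matrix: each block row i >= 2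
   (1-based) is either the corresponding row of the block circulant matrix
   with the same first block row, or J_s times it (blockwise). *)
Definition disoriented_block_circulant (R : pzRingType) (r s : nat)
    (A : 'M[R]_(r * s)) : Prop :=
  exists d : 'I_r -> bool, forall i j : 'I_r, val i != 0%N ->
    blk A i j = (if d i then Jmat R s *m blk A (row0 i) (circ_idx i j)
                 else blk A (row0 i) (circ_idx i j)).

Definition spectral_radius (R : rcfType) (n : nat) (M : 'M[R]_n) : R :=
  let rts := sval (closed_field_poly_normal (char_poly (map_mx (real_complex R) M))) in
  \big[Num.max/0]_(z <- rts) complex.Re `|z|.

From Pilot Require Import Defs.
From HB Require Import structures.
From mathcomp Require Import all_boot all_order all_algebra.
From mathcomp Require Import complex polyrcf.
From mathcomp Require Import lra zify.
Import Order.TTheory GRing.Theory Num.Theory.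
Local Open Scope ring_scope.

(* For a nonnegative matrix M, rho(M) is the largest c for which some nonzero
   nonnegative row vector w satisfies w M >= c w: the moduli of the entries of
   an eigenvector give such a w, and conversely such a w forces a real
   eigenvalue >= c, because (t I - M) has a nonnegative inverse whenever t lies
   above every real eigenvalue (induction on the size, via Schur complements).
   It thus suffices to transport these vectors between A and B = sum_j A_1j.
   Each block of A is D_i A_1,(j-i) with D_i in {I, J}.  Summing the blocks of
   w A gives (sum_i w_i D_i) B, and multiplying by I + J, which commutes with B
   and absorbs every D_i, gives a vector for B.  Conversely, q = w (I + J) is
   fixed by J, and the row (q, ..., q) is a vector for A. *)

Module BlockCirculantSpectrum.
Set Implicit Arguments. Unset Strict Implicit. Unset Printing Implicit Defensive.

Section RealClosedPoly.
Variable R : rcfType.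
Implicit Types (p : {poly R}) (a c x y : R).

Lemma in_rootsR p x : p != 0 -> (x \in rootsR p) = root p x.
Proof. by move=> p0; rewrite -(roots_on_rootsR p0) in_itv. Qed.

Lemma horner_le0_right p a : (forall x, a < x -> p.[x] <= 0) -> p.[a] <= 0.
Proof.
move=> le0; rewrite leNgt; apply/negP => pa_gt0.
have [d d_gt0 near_a] := poly_cont a p pa_gt0.
have := near_a (a + d / 2%:R).
rewrite addrAC subrr add0r ger0_norm ?divr_ge0 ?ltW //.
rewrite ltr_pdivrMr ?ltr0n // ltr_pMr // ?ltr1n // => /(_ isT).
have : p.[a + d / 2%:R] <= 0 by apply: le0; rewrite ltrDl divr_gt0 ?ltr0n.
by move=> hle; rewrite ltr_norml => /andP[+ _]; lra.
Qed.

Lemma monic_horner_gt0 p c : p \is monic ->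
  (forall x, c <= x -> ~~ root p x) -> forall x, c <= x -> 0 < p.[x].
Proof.
move=> p_monic noroot x cx; rewrite ltNge; apply/negP => px_le0.
have lc_gt0 : 0 < lead_coef p by rewrite (monicP p_monic) ltr01.
have [N geN] := poly_pinfty_gt_lc lc_gt0.
have x_le : x <= Num.max N x by rewrite le_max lexx orbT.
have px'_ge0 : 0 <= p.[Num.max N x].
  by apply: le_trans (geN _ _); rewrite ?(monicP p_monic) ?ler01 // le_max lexx.
have := poly_ivt (p := p) x_le; rewrite px_le0 px'_ge0 => /(_ isT) [y /andP[xy _] root_y].
by have := noroot y (le_trans cx xy); rewrite root_y.
Qed.

Lemma monic_root_ge_or_gt0 p c : p \is monic ->
  (exists2 x, c <= x & root p x) \/ (forall x, c <= x -> 0 < p.[x]).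
Proof.
move=> p_monic; have p_neq0 := monic_neq0 p_monic.
case: (boolP (has (fun x => c <= x) (rootsR p))) => [/hasP[x]|/hasPn noroot].
  by rewrite in_rootsR // => root_x cx; left; exists x.
right; apply: monic_horner_gt0 p_monic _ => x cx; apply/negP => root_x.
by have := noroot x; rewrite in_rootsR // root_x cx => /(_ isT).
Qed.

Lemma monic_max_root p c : p \is monic -> p.[c] <= 0 ->
  exists x, [/\ c <= x, root p x & forall y, x < y -> 0 < p.[y]].
Proof.
move=> p_monic pc_le0; have p_neq0 := monic_neq0 p_monic.
have [[z cz root_z]|p_gt0] := monic_root_ge_or_gt0 c p_monic; last first.
  by have := p_gt0 c (lexx c); rewrite ltNge pc_le0.
pose x := \big[Num.max/z]_(y <- rootsR p) y.
have root_le_x y : root p y -> y <= x.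
  by move=> root_y; apply: le_bigmax_seq; rewrite ?in_rootsR.
exists x; split; first exact: le_trans cz (bigmax_ge_id _ _ _ _).
  rewrite /x big_seq; apply: (big_ind (root p)) => // [a b ra rb|y].
    by rewrite maxEle; case: ifP.
  by rewrite in_rootsR.
move=> y xy; apply: (monic_horner_gt0 p_monic) (lexx y) => w yw.
by apply/negP => /root_le_x wx; have := lt_le_trans xy (le_trans yw wx); rewrite ltxx.
Qed.

End RealClosedPoly.

Lemma horner_char_poly (R : comNzRingType) n (A : 'M[R]_n) a :
  (char_poly A).[a] = \det (a%:M - A).
Proof.
rewrite /char_poly -[LHS]/(horner_eval a _) -det_map_mx; congr (\det _).
apply/matrixP => i j; rewrite !mxE /horner_eval /=.
by rewrite horner_evalE hornerD hornerN hornerMn hornerX hornerC.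
Qed.

Lemma det_block_schur (R : comUnitRingType) m (a : R) (u : 'rV[R]_m)
    (v : 'cV[R]_m) (M : 'M[R]_m) : M \in unitmx ->
  \det (block_mx a%:M u v M) = (a - (u *m invmx M *m v) 0 0) * \det M.
Proof.
move=> M_unit.
have -> : block_mx a%:M u v M
    = block_mx (a - (u *m invmx M *m v) 0 0)%:M u 0 M
      *m block_mx 1%:M 0 (invmx M *m v) 1%:M.
  rewrite mulmx_block !mulmx0 !mulmx1 !add0r mulKVmx // mulmxA.
  by rewrite (raddfB (@scalar_mx _ 1)) /= -mx11_scalar subrK.
by rewrite det_mulmx det_ublock det_lblock !det1 det_mx11 mxE /= mulr1n !mulr1.
Qed.

Section NonnegMatrix.
Variable R : numDomainType.

Definition nnegmx m n (M : 'M[R]_(m, n)) := forall i j, 0 <= M i j.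

Lemma nnegmxD m n (M N : 'M[R]_(m, n)) : nnegmx M -> nnegmx N -> nnegmx (M + N).
Proof. by move=> M0 N0 i j; rewrite mxE addr_ge0. Qed.

Lemma nnegmxM m n p (M : 'M[R]_(m, n)) (N : 'M[R]_(n, p)) :
  nnegmx M -> nnegmx N -> nnegmx (M *m N).
Proof. by move=> M0 N0 i j; rewrite mxE sumr_ge0 // => k _; rewrite mulr_ge0. Qed.

Lemma nnegmx1 n : nnegmx (1%:M : 'M[R]_n).
Proof. by move=> i j; rewrite mxE ler0n. Qed.

Lemma nnegmx_sum m n (I : finType) (F : I -> 'M[R]_(m, n)) :
  (forall i, nnegmx (F i)) -> nnegmx (\sum_i F i).
Proof. by move=> F0 a b; rewrite summxE sumr_ge0 // => i _; apply: F0. Qed.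

Lemma nnegmx_row_mx m n1 n2 (M1 : 'M[R]_(m, n1)) (M2 : 'M[R]_(m, n2)) :
  nnegmx M1 -> nnegmx M2 -> nnegmx (row_mx M1 M2).
Proof.
by move=> M10 M20 i j; case: (split_ordP j) => j' ->; rewrite ?row_mxEl ?row_mxEr.
Qed.

Lemma nnegmx_add_eq0 m n (M N : 'M[R]_(m, n)) : nnegmx M -> nnegmx N ->
  (M + N == 0) = (M == 0) && (N == 0).
Proof.
move=> M0 N0; apply/eqP/andP => [/matrixP MN0|[/eqP-> /eqP->]]; last by rewrite addr0.
have entry_eq0 i j : (M i j == 0) && (N i j == 0).
  by rewrite -paddr_eq0 //; move: (MN0 i j); rewrite !mxE => ->.
by split; apply/eqP/matrixP => i j; rewrite mxE;
  have /andP[/eqP Mij0 /eqP Nij0] := entry_eq0 i j; rewrite ?Mij0 ?Nij0.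
Qed.

Lemma psum_nnegmx_eq0 m n (I : finType) (F : I -> 'M[R]_(m, n)) :
  (forall i, nnegmx (F i)) -> \sum_i F i = 0 -> forall i, F i = 0.
Proof.
move=> F0 /matrixP sum0 i; apply/matrixP => a b; rewrite mxE.
have sum_ab : \sum_k F k a b = 0 by move: (sum0 a b); rewrite summxE mxE.
exact: (psumr_eq0P (fun k _ => F0 k a b) sum_ab).
Qed.

Definition collatz_wielandt_lb n (M : 'M[R]_n) c :=
  exists w : 'rV[R]_n, [/\ nnegmx w, w != 0 & nnegmx (w *m M - c *: w)].

Lemma collatz_wielandt_symmetrize n (B P : 'M[R]_n) (W W' : 'rV[R]_n) c :
  nnegmx P -> B *m P = P *m B -> W' *m P = W *m P ->
  nnegmx (W' *m B - c *: W) -> nnegmx (W *m P *m B - c *: (W *m P)).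
Proof.
move=> P_ge0 BP W'P X_ge0.
have -> : W *m P *m B - c *: (W *m P) = (W' *m B - c *: W) *m P.
  by rewrite mulmxBl -scalemxAl -[W' *m B *m P]mulmxA BP mulmxA W'P.
exact: nnegmxM.
Qed.

End NonnegMatrix.

Section InverseNonneg.
Variable R : rcfType.

(* For nonnegative [B] this says that [t] exceeds the spectral radius of [B]. *)
Definition above_spectrum n (B : 'M[R]_n) t := forall s, t <= s -> 0 < \det (s%:M - B).

Section SchurStep.
Variables (m : nat) (b : R) (u : 'rV[R]_m) (v : 'cV[R]_m) (B : 'M[R]_m).
Hypotheses (u_ge0 : nnegmx u) (v_ge0 : nnegmx v).
Hypothesis inverse_nonneg_B : forall t k (x : 'M[R]_(k, m)),
  above_spectrum B t -> nnegmx (x *m (t%:M - B)) -> nnegmx x.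

Let M : 'M[R]_(1 + m) := block_mx b%:M u v B.
Let schur s := (u *m invmx (s%:M - B) *m v) 0 0.

Lemma shift_block_mx s : s%:M - M = block_mx (s - b)%:M (- u) (- v) (s%:M - B).
Proof.
rewrite /M (scalar_mx_block 1 m s) opp_block_mx add_block_mx !sub0r.
by rewrite (raddfB (@scalar_mx _ 1)).
Qed.

Lemma schur_shift s : above_spectrum B s ->
  [/\ s%:M - B \in unitmx, nnegmx (invmx (s%:M - B)), 0 <= schur s &
      \det (s%:M - M) = (s - b - schur s) * \det (s%:M - B)].
Proof.
move=> B_s; have B_unit : s%:M - B \in unitmx by rewrite unitmxE unitfE gt_eqF ?B_s.
have inv_ge0 : nnegmx (invmx (s%:M - B)).
  by apply: (inverse_nonneg_B B_s); rewrite mulVmx //; apply: nnegmx1.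
split => //; first exact: nnegmxM (nnegmxM u_ge0 inv_ge0) v_ge0 0 0.
by rewrite shift_block_mx det_block_schur ?unitmx_opp // !mulNmx mulmxN opprK.
Qed.

(* At a largest root [s1] of [char_poly B], the Schur complement formula makes
   [char_poly M - ('X - b) * char_poly B] nonpositive to the right of [s1],
   hence [char_poly M] nonpositive at [s1]. *)
Lemma above_spectrum_drsub t : above_spectrum M t -> above_spectrum B t.
Proof.
move=> M_t s ts; rewrite ltNge; apply/negP => det_le0.
have charB_s : (char_poly B).[s] <= 0 by rewrite horner_char_poly.
have [s1 [s_le_s1 root_s1 gt_s1]] := monic_max_root (char_poly_monic B) charB_s.
pose h := char_poly M - ('X - b%:P) * char_poly B.
have h_le0 : h.[s1] <= 0.
  apply: horner_le0_right => y s1y.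
  have B_y : above_spectrum B y.
    by move=> y' yy'; rewrite -horner_char_poly gt_s1 // (lt_le_trans s1y yy').
  have [_ _ schur_ge0 det_M] := schur_shift B_y.
  rewrite !hornerE !horner_char_poly det_M subr_le0 ler_pM2r ?B_y //.
  by rewrite lerBlDr lerDl.
move: h_le0; rewrite !hornerE (rootP root_s1) mulr0 subr0 horner_char_poly.
by rewrite leNgt M_t // (le_trans ts s_le_s1).
Qed.

Lemma inverse_nonneg_block t k (x : 'M[R]_(k, 1 + m)) :
  above_spectrum M t -> nnegmx (x *m (t%:M - M)) -> nnegmx x.
Proof.
move=> M_t; have B_t := above_spectrum_drsub M_t.
have [B_unit G_ge0 schur_ge0 det_M] := schur_shift B_t.
set G := invmx _ in B_unit G_ge0 det_M; set c := schur t in schur_ge0 det_M.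
have c_lt : 0 < t - b - c.
  by have := M_t t (lexx t); rewrite det_M pmulr_lgt0 ?B_t.
rewrite -[x]hsubmxK shift_block_mx mul_row_block.
set x0 := lsubmx x; set x1 := rsubmx x; set y0 := _ + _; set y1 := _ + _ => y_ge0.
have y0_ge0 : nnegmx y0 by move=> i j; have := y_ge0 i (lshift m j); rewrite row_mxEl.
have y1_ge0 : nnegmx y1 by move=> i j; have := y_ge0 i (rshift 1 j); rewrite row_mxEr.
have x1E : x1 = (y1 + x0 *m u) *m G.
  by rewrite /y1 mulmxN addrC addrA subrr add0r mulmxK.
have x0E : (t - b - c) *: x0 = y0 + y1 *m G *m v.
  have uGv : u *m G *m v = c%:M by rewrite [LHS]mx11_scalar.
  clearbody y1; rewrite /y0 x1E mulmxN !mulmxDl -(mulmxA x0 u) -(mulmxA x0) uGv.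
  by rewrite !mul_mx_scalar scalerBl opprD addrA addrAC subrK.
have x0_ge0 : nnegmx x0.
  move=> i j; have := nnegmxD y0_ge0 (nnegmxM (nnegmxM y1_ge0 G_ge0) v_ge0) i j.
  by rewrite -x0E mxE pmulr_rge0.
apply: nnegmx_row_mx => //; rewrite x1E.
exact: nnegmxM (nnegmxD y1_ge0 (nnegmxM x0_ge0 u_ge0)) G_ge0.
Qed.

End SchurStep.

Lemma inverse_nonneg_shift n (B : 'M[R]_n) t k (x : 'M[R]_(k, n)) :
  nnegmx B -> above_spectrum B t -> nnegmx (x *m (t%:M - B)) -> nnegmx x.
Proof.
elim: n => [|m IH] in B t k x *; first by move=> _ _ _ i [].
move=> B_ge0; pose B1 : 'M_(1 + m) := B.
have -> : B = block_mx (ulsubmx B1 0 0)%:M (ursubmx B1) (dlsubmx B1) (drsubmx B1).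
  by rewrite -mx11_scalar submxK.
apply: inverse_nonneg_block => [i j|i j|t1 k1 x1]; rewrite ?mxE //.
by apply: IH => i j; rewrite !mxE.
Qed.

End InverseNonneg.

Section SpectralRadius.
Variable R : rcfType.
Local Open Scope complex_scope.

Lemma collatz_wielandt_eigenvalue n (M : 'M[R]_n) c :
  nnegmx M -> collatz_wielandt_lb M c -> exists2 t, c <= t & \det (t%:M - M) = 0.
Proof.
move=> M_ge0 [w [w_ge0 w_neq0 wM_ge0]].
have [[t ct /rootP]|M_c] := monic_root_ge_or_gt0 c (char_poly_monic M).
  by rewrite horner_char_poly; exists t.
have M_above_c : above_spectrum M c by move=> s cs; rewrite -horner_char_poly M_c.
have Nw_ge0 : nnegmx (- w).
  by apply: (inverse_nonneg_shift M_ge0 M_above_c); rewrite mulNmx mulmxBr mul_mx_scalar opprB.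
case/negP: w_neq0; apply/eqP/matrixP => i j; apply/le_anti.
by rewrite mxE w_ge0 andbT -oppr_ge0; have := Nw_ge0 i j; rewrite mxE.
Qed.

Lemma mem_char_roots n (M : 'M[R]_n) (z : R[i]) :
  let p := char_poly (map_mx (real_complex R) M) in
  (z \in sval (closed_field_poly_normal p)) = root p z.
Proof.
move=> p; case: (closed_field_poly_normal p) => rs /= ->.
by rewrite rootZ ?root_prod_XsubC // (monicP (char_poly_monic _)) oner_eq0.
Qed.

Lemma real_eigenvalue_le_spectral_radius n (M : 'M[R]_n) t :
  0 <= t -> \det (t%:M - M) = 0 -> t <= spectral_radius M.
Proof.
move=> t_ge0 det0; rewrite /spectral_radius.
have t_root : t%:C \in sval (closed_field_poly_normal (char_poly (map_mx (real_complex R) M))).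
  rewrite mem_char_roots -map_char_poly; apply/rootP.
  by rewrite horner_map horner_char_poly det0 rmorph0.
have := le_bigmax_seq 0 _ xpredT (fun z : R[i] => complex.Re `|z|) t_root isT.
by rewrite ger0_norm ?ler0c.
Qed.

Lemma normc_ReE (z : R[i]) : `|z| = (complex.Re `|z|)%:C.
Proof. by rewrite normc_def. Qed.

Lemma collatz_wielandt_root n (M : 'M[R]_n) (z : R[i]) : nnegmx M ->
  root (char_poly (map_mx (real_complex R) M)) z ->
  collatz_wielandt_lb M (complex.Re `|z|).
Proof.
move=> M_ge0; rewrite -eigenvalue_root_char => /eigenvalueP [v v_eigen v_neq0].
exists (\row_j complex.Re `|v 0 j|); split.
- by move=> i j; rewrite mxE -ler0c -normc_ReE.
- apply: contra v_neq0 => /eqP/matrixP v0; apply/eqP/matrixP => i j.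
  by have := v0 i j; rewrite !mxE (ord1 i) => vj0; apply/eqP; rewrite -normr_eq0 normc_ReE vj0.
move=> i j; rewrite (ord1 i) !mxE subr_ge0 -lecR rmorphM /= -!normc_ReE.
have := congr1 (fun X : 'rV[R[i]]_n => X 0 j) v_eigen; rewrite /= !mxE => vMj.
rewrite -normrM -vMj (rmorph_sum (real_complex R)).
apply: le_trans (ler_norm_sum _ _ _) _; apply: ler_sum => k _.
rewrite !mxE normrM rmorphM /= -[Normc.normc _]/(complex.Re `|v 0 k|) -normc_ReE.
by rewrite [`|(M k j)%:C|]ger0_norm // ler0c M_ge0.
Qed.

Lemma spectral_radius_le m n (M : 'M[R]_m) (N : 'M[R]_n) : nnegmx M -> nnegmx N ->
  (forall c, collatz_wielandt_lb M c -> collatz_wielandt_lb N c) ->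
  spectral_radius M <= spectral_radius N.
Proof.
move=> M_ge0 N_ge0 MN; rewrite {1}/spectral_radius big_seq; apply: bigmax_le.
  exact: bigmax_ge_id.
move=> z; rewrite mem_char_roots => /(collatz_wielandt_root M_ge0) /MN cw_N.
have [t ct det0] := collatz_wielandt_eigenvalue N_ge0 cw_N.
have c_ge0 : 0 <= complex.Re `|z| by rewrite -ler0c -normc_ReE.
exact: le_trans ct (real_eigenvalue_le_spectral_radius (le_trans c_ge0 ct) det0).
Qed.

End SpectralRadius.

Section BlockIndices.
Variables (r s : nat) (hs : (0 < s)%N).

Lemma blk_inv_lt (g : 'I_(r * s)) : (g %/ s < r)%N.
Proof. by rewrite ltn_divLR // ltn_ord. Qed.

Definition blk_inv (g : 'I_(r * s)) : 'I_r * 'I_s :=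
  (Ordinal (blk_inv_lt g), Ordinal (ltn_pmod g hs)).

Lemma blk_idxK (i : 'I_r) (k : 'I_s) : blk_inv (blk_idx i k) = (i, k).
Proof.
rewrite /blk_inv; congr pair; apply: val_inj => /=.
  by rewrite divnMDl // divn_small // addn0.
by rewrite modnMDl modn_small.
Qed.

Lemma blk_invK (g : 'I_(r * s)) : blk_idx (blk_inv g).1 (blk_inv g).2 = g.
Proof. by apply: val_inj => /=; rewrite -divn_eq. Qed.

Lemma sum_blk_idx (V : nmodType) (F : 'I_(r * s) -> V) :
  \sum_g F g = \sum_(i < r) \sum_(k < s) F (blk_idx i k).
Proof.
rewrite pair_big (reindex (fun p : 'I_r * 'I_s => blk_idx p.1 p.2)) //=.
by exists blk_inv => [[i k] _|g _]; rewrite ?blk_idxK ?blk_invK.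
Qed.

Section RowBlocks.
Variable R : numDomainType.
Implicit Types (w x y : 'rV[R]_(r * s)) (q : 'rV[R]_s).

Definition rowblk w (i : 'I_r) : 'rV[R]_s := \row_k w 0 (blk_idx i k).

Definition rowblk_repeat q : 'rV[R]_(r * s) := \row_g q 0 (blk_inv g).2.

Lemma rowblk_repeatK q i : rowblk (rowblk_repeat q) i = q.
Proof. by apply/matrixP => a k; rewrite (ord1 a) !mxE blk_idxK. Qed.

Lemma rowblk_subZ y x c i : rowblk (y - c *: x) i = rowblk y i - c *: rowblk x i.
Proof. by apply/matrixP => a k; rewrite !mxE. Qed.

Lemma rowblk_mul w (A : 'M[R]_(r * s)) j :
  rowblk (w *m A) j = \sum_i rowblk w i *m blk A i j.
Proof.
apply/matrixP => a l; rewrite !mxE summxE sum_blk_idx; apply: eq_bigr => i _.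
by rewrite !mxE; apply: eq_bigr => k _; rewrite !mxE.
Qed.

Lemma rowblk_eq0 w : (w == 0) = [forall i, rowblk w i == 0].
Proof.
apply/eqP/forallP => [-> i|w0]; first by apply/eqP/matrixP => a k; rewrite !mxE.
apply/matrixP => a g; rewrite (ord1 a) -(blk_invK g).
by move/eqP/matrixP: (w0 (blk_inv g).1) => /(_ 0 (blk_inv g).2); rewrite !mxE.
Qed.

Lemma nnegmx_rowblk w : nnegmx w <-> forall i, nnegmx (rowblk w i).
Proof.
split=> [w_ge0 i a k|w_ge0 a g]; first by rewrite mxE.
by rewrite (ord1 a) -(blk_invK g); have := w_ge0 (blk_inv g).1 0 (blk_inv g).2; rewrite mxE.
Qed.

End RowBlocks.
End BlockIndices.

Section CirculantIndex.
Variable r : nat.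

Lemma circ_idx_inj (i : 'I_r) : injective (circ_idx i).
Proof.
move=> j1 j2 /(congr1 val) /=; have ir : (i <= r)%N := ltnW (ltn_ord i).
rewrite -!addnBA // => /eqP; rewrite eqn_modDr !modn_small // => /eqP.
exact: val_inj.
Qed.

Lemma circ_idx_injl (j : 'I_r) : injective (fun i => circ_idx i j).
Proof.
move=> i1 i2 /(congr1 val) /= /eqP; apply: contraTeq => i12.
have i1r : (i1 <= r)%N := ltnW (ltn_ord i1).
have i2r : (i2 <= r)%N := ltnW (ltn_ord i2).
rewrite -(eqn_modDr (i1 + i2)).
have -> : (j + r - i1 + (i1 + i2) = j + r + i2)%N by lia.
have -> : (j + r - i2 + (i1 + i2) = j + r + i1)%N by lia.
by rewrite eqn_modDl !modn_small // eq_sym; apply: contra i12 => /eqP/val_inj->.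
Qed.

Lemma circ_idx0 (hr : (0 < r)%N) (j : 'I_r) : circ_idx (Ordinal hr) j = j.
Proof. by apply: val_inj => /=; rewrite subn0 modnDr modn_small. Qed.

End CirculantIndex.

Lemma Jmat_invol (R : pzRingType) s : Jmat R s *m Jmat R s = 1%:M.
Proof.
apply/matrixP => i k; rewrite !mxE (bigD1 (rev_ord i)) //= big1 ?addr0; last first.
  move=> j /eqP ji; rewrite !mxE; case: eqP => [ij|]; last by rewrite mul0r.
  by case: ji; apply: val_inj => /=; have := ltn_ord i; lia.
have hi := ltn_ord i; have hk := ltn_ord k.
rewrite !mxE /= (_ : (i + (s - i.+1) == s.-1)%N) ?mul1r; last by apply/eqP; lia.
suff -> : ((s - i.+1 + k)%N == s.-1) = (i == k) by [].
by apply/eqP/eqP => [?|->]; [apply: val_inj => /=|]; lia.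
Qed.

Lemma nnegmx_Jmat (R : numDomainType) s : nnegmx (Jmat R s).
Proof. by move=> i j; rewrite mxE ler0n. Qed.

Lemma disoriented_blk_factor (R : pzRingType) r s (hr : (0 < r)%N) (A : 'M[R]_(r * s)) :
  disoriented_block_circulant A -> exists D : 'I_r -> 'M[R]_s,
    (forall i, D i = 1%:M \/ D i = Jmat R s) /\
    forall i j, blk A i j = D i *m blk A (Ordinal hr) (circ_idx i j).
Proof.
move=> [d blkA]; exists (fun i => if (val i != 0%N) && d i then Jmat R s else 1%:M).
split=> [i|i j]; first by case: ifP; [right|left].
have [i0|i_neq0] /= := eqVneq (val i) 0%N.
  have -> : i = Ordinal hr by apply: val_inj.
  by rewrite circ_idx0 mul1mx.
rewrite blkA // (_ : Defs.row0 i = Ordinal hr); last exact: val_inj.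
by case: (d i); rewrite ?mul1mx.
Qed.

Section DisorientedCirculant.
Variables (R : numDomainType) (r s : nat) (hr : (0 < r)%N) (hs : (0 < s)%N).
Variables (A : 'M[R]_(r * s)) (D : 'I_r -> 'M[R]_s).
Hypothesis D_1J : forall i, D i = 1%:M \/ D i = Jmat R s.
Hypothesis blkA : forall i j, blk A i j = D i *m blk A (Ordinal hr) (circ_idx i j).
Local Notation J := (Jmat R s).
Local Notation B := (\sum_(j < r) blk A (Ordinal hr) j).
Hypothesis BJ : B *m J = J *m B.
Local Notation P := (1%:M + J).

Let P_ge0 : nnegmx P.
Proof. by apply: nnegmxD; [apply: nnegmx1 | apply: nnegmx_Jmat]. Qed.

Let BP : B *m P = P *m B.
Proof. by rewrite mulmxDr mulmxDl BJ mulmx1 mul1mx. Qed.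

Let JP : J *m P = P.
Proof. by rewrite mulmxDr mulmx1 Jmat_invol addrC. Qed.

Let DP i : D i *m P = P.
Proof. by case: (D_1J i) => ->; rewrite ?mul1mx ?JP. Qed.

Let mulP_eq0 (W : 'rV[R]_s) : nnegmx W -> (W *m P == 0) = (W == 0).
Proof.
move=> W_ge0; rewrite mulmxDr mulmx1 nnegmx_add_eq0 //.
  by apply/andb_idr => /eqP->; rewrite mul0mx.
by apply: nnegmxM W_ge0 _; apply: nnegmx_Jmat.
Qed.

Let sum_blk_circ_row i : \sum_j blk A (Ordinal hr) (circ_idx i j) = B.
Proof. by rewrite [RHS](reindex_inj (@circ_idx_inj _ i)). Qed.

Let sum_blk_circ_col j : \sum_i blk A (Ordinal hr) (circ_idx i j) = B.
Proof. by rewrite [RHS](reindex_inj (@circ_idx_injl _ j)). Qed.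

Lemma collatz_wielandt_blk_sum c : collatz_wielandt_lb A c -> collatz_wielandt_lb B c.
Proof.
move=> [w [w_ge0 w_neq0 wA_ge0]].
have blocks_ge0 : forall i, nnegmx (rowblk w i) by apply/(nnegmx_rowblk hs).
pose W := \sum_i rowblk w i; pose W' := \sum_i rowblk w i *m D i.
have W'B : W' *m B = \sum_j rowblk (w *m A) j.
  under [RHS]eq_bigr do rewrite (rowblk_mul hs).
  rewrite exchange_big mulmx_suml; apply: eq_bigr => i _.
  under eq_bigr do rewrite blkA mulmxA.
  by rewrite -mulmx_sumr sum_blk_circ_row.
have X_ge0 : nnegmx (W' *m B - c *: W).
  rewrite W'B /W scaler_sumr -sumrB; apply: nnegmx_sum => j.
  by rewrite -rowblk_subZ; move/(nnegmx_rowblk hs): wA_ge0.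
have W'P : W' *m P = W *m P.
  by rewrite !mulmx_suml; apply: eq_bigr => i _; rewrite -mulmxA DP.
have W_ge0 : nnegmx W := nnegmx_sum blocks_ge0.
exists (W *m P); split; first exact: nnegmxM W_ge0 P_ge0.
  rewrite mulP_eq0 //; apply: contra w_neq0 => /eqP W0; rewrite (rowblk_eq0 hs).
  by apply/forallP => i; rewrite (psum_nnegmx_eq0 blocks_ge0 W0).
exact: collatz_wielandt_symmetrize P_ge0 BP W'P X_ge0.
Qed.

Lemma collatz_wielandt_of_blk_sum c : collatz_wielandt_lb B c -> collatz_wielandt_lb A c.
Proof.
move=> [w [w_ge0 w_neq0 wB_ge0]]; pose q := w *m P.
have qD i : q *m D i = q.
  by case: (D_1J i) => ->; rewrite ?mulmx1 // -mulmxA mulmxDl mul1mx Jmat_invol addrC.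
exists (rowblk_repeat r hs q); split.
- by apply/(nnegmx_rowblk hs) => i; rewrite rowblk_repeatK; apply: nnegmxM.
- rewrite (rowblk_eq0 hs); apply/forallPn; exists (Ordinal hr).
  by rewrite rowblk_repeatK mulP_eq0.
apply/(nnegmx_rowblk hs) => j; rewrite rowblk_subZ (rowblk_mul hs) rowblk_repeatK.
under eq_bigr do rewrite rowblk_repeatK blkA mulmxA qD.
rewrite -mulmx_sumr sum_blk_circ_col.
exact: collatz_wielandt_symmetrize (erefl _) wB_ge0.
Qed.

End DisorientedCirculant.

End BlockCirculantSpectrum.
Import BlockCirculantSpectrum.

Theorem lemma4p3 (R : rcfType) (r s : nat) (hr : (0 < r)%N) (hs : (0 < s)%N)
    (A : 'M[R]_(r * s)) :
  (forall i j, 0 <= A i j) ->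
  disoriented_block_circulant A ->
  (\sum_(j < r) blk A (Ordinal hr) j) *m Jmat R s
    = Jmat R s *m (\sum_(j < r) blk A (Ordinal hr) j) ->
  spectral_radius A = spectral_radius (\sum_(j < r) blk A (Ordinal hr) j).
Proof.
move=> A_ge0 /(disoriented_blk_factor hr) [D [D_1J blkA]] BJ.
have B_ge0 : nnegmx (\sum_(j < r) blk A (Ordinal hr) j).
  by apply: nnegmx_sum => j a b; rewrite mxE.
apply/le_anti/andP; split; apply: spectral_radius_le => // c.
  exact: collatz_wielandt_blk_sum.
exact: collatz_wielandt_of_blk_sum.
Qed.
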